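(* Let $n,d\ge 2$, and let $0\le a<b\le d$. Let $\boldsymbol\gamma_a\in\mathbb{R}^{\binom{n+a-1}{a}}$ and $\boldsymbol\gamma_b\in\mathbb{R}^{\binom{n+b-1}{b}}$ be nonnegative vectors with $R(\boldsymbol\gamma_a)=R(\boldsymbol\gamma_b)=1$, and set $$\mathbf v=(-1)^{d-a}J_{n,d}J_{n,d-1}\cdots J_{n,a}\boldsymbol\gamma_a+(-1)^{d-b}J_{n,d}J_{n,d-1}\cdots J_{n,b}\boldsymbol\gamma_b.$$ If $\mathbf v\ge 0$, then $R(\mathbf v)\ge \binom{n+2}{3}-1$.
   Context: For a real vector $\mathbf x$, $R(\mathbf x)$ is the number of nonzero components; inequalities are componentwise. For $j\ge 0$, $J_{n,j}$ is the matrix, with respect to the left lexicographic bases of degree-$j$ and degree-$(j+1)$ monomials in $x_1,\dots,x_n$, of the linear map $A(x)\mapsto A(x)(x_1+\cdots+x_n)$; so $J_{n,d}\cdots J_{n,a}\boldsymbol\gamma$ is the coefficient vector of $G(x)(x_1+\cdots+x_n)^{d-a+1}$ where $G$ has coefficient vector $\boldsymbol\gamma$. *)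

From mathcomp Require Import all_boot all_order all_algebra.
From mathcomp Require Import mpoly.
Set Implicit Arguments. Unset Strict Implicit. Unset Printing Implicit Defensive.
Import Order.TTheory GRing.Theory Num.Theory.
Local Open Scope ring_scope.

(* A real vector indexed by the degree-j monomials in x_1..x_n is identified
   with the homogeneous polynomial of degree j having these coefficients
   (the coordinate of monomial m is p@_m). *)

Definition sumX (R : nzRingType) (n : nat) : {mpoly R[n]} := \sum_(i < n) 'X_i.

(* J_{n,j} : the linear map A(x) |-> A(x) (x_1 + ... + x_n) (its matrix in
   the monomial bases is J_{n,j}); it does not depend on j as a map. *)
Definition Jmap (R : nzRingType) (n : nat) (A : {mpoly R[n]}) : {mpoly R[n]} :=
  A * sumX R n.

Definition Jprod (R : nzRingType) (n a d : nat) (A : {mpoly R[n]}) : {mpoly R[n]} :=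
  iter (d - a).+1 (@Jmap R n) A.

Definition nonneg_vec (R : numDomainType) (n : nat) (p : {mpoly R[n]}) : Prop :=
  forall m, 0 <= p@_m.

Definition nnz (R : nzRingType) (n : nat) (p : {mpoly R[n]}) : nat := size (msupp p).

(* Write ga = c x^al, gb = e x^be and S = x_1 + ... + x_n, so that
   v = +-c x^al S^K +- e x^be S^L with K = d - a + 1 and L = d - b + 1; the
   coefficients of S^k are multinomial coefficients, positive exactly on the
   monomials of degree k.  As n >= 2 and deg be > deg al, some al + K U_i is
   not above be, and there v has the sign of its first term: d - a is even.
   If d - b is even too, v dominates c x^al S^K, whose support contains the
   al + (K - 3) U_i + t with deg t = 3.  Otherwise al <= be by the same
   argument, and v = x^al w with w = c S^K - e x^dl S^L, dl = be - al of odd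
   degree.  All partial derivatives of S^k agree, so the coefficients of S^k
   at g + U_q and g + U_p are in the ratio (g p + 1) : (g q + 1); comparing w
   at g and at g - U_q + U_p then shows w@_g > 0 whenever g uses a variable
   that dl does not.  Pushing the cubic monomials up to degree K along a
   suitable variable loses at most one of them from the support of w. *)

From mathcomp Require Import all_boot all_order all_algebra.
From mathcomp Require Import mpoly.
From mathcomp Require Import zify ring.
Set Implicit Arguments. Unset Strict Implicit. Unset Printing Implicit Defensive.
Import Order.TTheory GRing.Theory Num.Theory.
Local Open Scope ring_scope.

Section Monomials.
Variable n : nat.
Implicit Types (i j : 'I_n) (m t x y : 'X_{1..n}).

Lemma mdegUn i k : mdeg (U_(i) *+ k)%MM = k.
Proof. by rewrite mdegMn mdeg1 mul1n. Qed.

Lemma mnm_le_mdeg m i : (m i <= mdeg m)%N.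
Proof. by rewrite mdegE (bigD1 i) //= leq_addr. Qed.

Lemma lem_mdeg x y : (x <= y)%MM -> (mdeg x <= mdeg y)%N.
Proof. by move=> le_xy; rewrite -(submK le_xy) mdegD leq_addl. Qed.

Lemma lem_mdeg_eq x y : (x <= y)%MM -> (mdeg y <= mdeg x)%N -> x = y.
Proof.
move=> le_xy; rewrite -{1}(submK le_xy) mdegD => le_deg.
have /eqP : mdeg (y - x)%MM = 0%N by lia.
by rewrite mdeg_eq0 => /eqP yx0; rewrite -(submK le_xy) yx0 add0m.
Qed.

Lemma lem_addUn2 x y i j k : i != j ->
  (x <= y + U_(i) *+ k)%MM -> (x <= y + U_(j) *+ k)%MM -> (x <= y)%MM.
Proof.
move=> neq_ij /mnm_lepP le_i /mnm_lepP le_j; apply/mnm_lepP => l.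
move: (le_i l) (le_j l); rewrite !mnmDE !mulmnE !mnm1E.
case: (eqVneq i l) => [<-|_]; last by case: (j == l) => /=; lia.
by rewrite eq_sym (negbTE neq_ij) /=; lia.
Qed.

Lemma mdeg_gt0_mnm m : (0 < mdeg m)%N -> exists i, (0 < m i)%N.
Proof.
move=> deg_gt0; apply/existsP; apply: contraTT deg_gt0; rewrite negb_exists => /forallP m0.
rewrite -eqn0Ngt mdeg_eq0; apply/eqP/mnmP => i; rewrite mnm0E.
by move: (m0 i); rewrite lt0n negbK => /eqP.
Qed.

Lemma lep1m_gt0 i m : (0 < m i)%N -> (U_(i) <= m)%MM.
Proof. by rewrite lep1mP lt0n. Qed.

Definition shiftm r1 r2 k t := (t + U_(if (0 < t r1)%N then r1 else r2) *+ k)%MM.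

Lemma mdeg_shiftm r1 r2 k t : mdeg (shiftm r1 r2 k t) = (mdeg t + k)%N.
Proof. by rewrite mdegD mdegUn. Qed.

Lemma shiftm_inj r1 r2 k : injective (shiftm r1 r2 k).
Proof.
rewrite /shiftm; case: (eqVneq r1 r2) => [<- t1 t2|neq_12 t1 t2].
  by rewrite !if_same => /addIm.
have coord_r1 t : ((t + U_(if (0 < t r1)%N then r1 else r2) *+ k)%MM r1 =
    t r1 + (0 < t r1) * k)%N.
  rewrite mnmDE mulmnE mnm1E.
  by case: (0 < t r1)%N; rewrite /= ?eqxx // eq_sym (negbTE neq_12).
move=> eq_t; have := congr1 (fun m => m r1) eq_t; rewrite /= !coord_r1 => eq_r1.
have same_branch : (0 < t1 r1)%N = (0 < t2 r1)%N.
  by move: eq_r1; case: (ltnP 0 (t1 r1)); case: (ltnP 0 (t2 r1)) => /=; lia.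
by move: eq_t; rewrite same_branch => /addIm.
Qed.

Lemma exists_ord_neq i : (2 <= n)%N -> exists j, j != i.
Proof.
move=> n_ge2; pose i0 : 'I_n := Ordinal (ltnW n_ge2); pose i1 : 'I_n := Ordinal n_ge2.
by case: (eqVneq i i0) => [->|neq]; [exists i1 | exists i0; rewrite eq_sym].
Qed.

Lemma exists_cubic_below (dl : 'X_{1..n}) : (2 <= n)%N ->
  (forall s, 0 < dl s)%N -> odd (mdeg dl) ->
  exists r m0, [/\ mdeg m0 = 3, (m0 r <= 1)%N & forall s, s != r -> (m0 s <= dl s)%N].
Proof.
move=> n_ge2 dl_gt0 odd_dl.
case: (boolP [exists s, 1 < dl s]%N) => [/existsP[s dl_s]|].
  have [r neq_rs] := exists_ord_neq s n_ge2.
  exists r, (U_(r) + U_(s) *+ 2)%MM; split.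
  - by rewrite mdegD mdeg1 mdegUn.
  - by rewrite mnmDE mulmnE !mnm1E eqxx eq_sym (negbTE neq_rs).
  - move=> j neq_jr; rewrite mnmDE mulmnE !mnm1E eq_sym (negbTE neq_jr) add0n.
    by case: (eqVneq s j) => [<-|] //=; rewrite mul1n.
rewrite negb_exists => /forallP dl_le1.
have dl1 s : dl s = 1%N by move: (dl_le1 s) (dl_gt0 s); lia.
have n_gt2 : (2 < n)%N.
  suff deg_dl : mdeg dl = n.
    have : n != 2%N by apply: contraTneq odd_dl => n2; rewrite deg_dl n2.
    lia.
  by rewrite mdegE (eq_bigr (fun _ => 1%N)) ?sum1_card ?card_ord.
pose i0 : 'I_n := Ordinal (ltnW (ltnW n_gt2)); pose i1 : 'I_n := Ordinal (ltnW n_gt2).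
pose i2 : 'I_n := Ordinal n_gt2.
have m0_le1 s : ((U_(i0) + U_(i1) + U_(i2))%MM s <= 1)%N.
  by rewrite !mnmDE !mnm1E -!val_eqE /=; case: (nat_of_ord s) => [|[|[|]]].
exists i0, (U_(i0) + U_(i1) + U_(i2))%MM; split => // [|s _].
  by rewrite !mdegD !mdeg1.
by rewrite dl1.
Qed.

End Monomials.

Lemma size_sub1_le_count (T : eqType) (P : pred T) (s : seq T) :
  uniq s -> {in s &, forall x y, ~~ P x -> ~~ P y -> x = y} ->
  (size s - 1 <= count P s)%N.
Proof.
move=> uniq_s failP; rewrite -(count_predC P s).
suff : (count (predC P) s <= 1)%N by lia.
rewrite -size_filter; case E: [seq x <- s | ~~ P x] => [//|x r].
have : x \in [seq x <- s | ~~ P x] by rewrite E mem_head.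
rewrite mem_filter => /andP[Px s_x].
rewrite -E (@uniq_leq_size _ _ [:: x]) ?filter_uniq // => y.
by rewrite mem_filter inE => /andP[Py s_y]; apply/eqP; apply: failP.
Qed.

Definition dmonomials n d : seq 'X_{1..n} :=
  [seq s2m t | t : d.-tuple 'I_n <- enum (basis n d)].

Lemma mem_dmonomials n d m : (m \in dmonomials n d) = (mdeg m == d).
Proof. by rewrite basis_cover. Qed.

Lemma dmonomials_uniq n d : uniq (dmonomials n d).
Proof. exact: uniq_basis. Qed.

Lemma size_dmonomials n d : (0 < n)%N -> size (dmonomials n d) = 'C(d + n - 1, d).
Proof. by case: n => // n _; rewrite size_basis; congr binomial; lia. Qed.

Section Support.
Variables (R : comNzRingType) (n : nat).
Implicit Types (p : {mpoly R[n]}) (m : 'X_{1..n}).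

Lemma count_le_nnz (s : seq 'X_{1..n}) f p :
  uniq s -> {in s &, injective f} -> (count (fun x => p@_(f x) != 0%R) s <= nnz p)%N.
Proof.
move=> uniq_s inj_f; rewrite -size_filter -(size_map f) /nnz uniq_leq_size //.
  rewrite map_inj_in_uniq ?filter_uniq // => x y.
  by rewrite !mem_filter => /andP[_ x_s] /andP[_ y_s]; apply: inj_f.
by move=> _ /mapP[x /[!mem_filter] /andP[nz_x _] ->]; rewrite mcoeff_msupp.
Qed.

Lemma nnz_XM m p : nnz ('X_[m] * p) = nnz p.
Proof. by rewrite /nnz mulrC (perm_size (msuppMX p m)) size_map. Qed.

End Support.

Section SumX.
Variables (R : comNzRingType) (n : nat).
Implicit Types (i j : 'I_n) (p : {mpoly R[n]}) (m g : 'X_{1..n}).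
Local Notation S := (sumX R n).

Lemma mcoeffMX_if p m g :
  (p * 'X_[m])@_g = if (m <= g)%MM then p@_(g - m)%MM else 0.
Proof.
case: ifP => [le_mg|nle_mg]; first by rewrite -{1}(submK le_mg) addmC mcoeffMX.
apply/eqP; rewrite mcoeff_eq0 (perm_mem (msuppMX p m)).
by apply/mapP => -[m' _ gE]; rewrite gE lem_addr in nle_mg.
Qed.

Lemma mcoeffZXM c m p g :
  (c *: 'X_[m] * p)@_g = c * (if (m <= g)%MM then p@_(g - m)%MM else 0).
Proof. by rewrite -scalerAl mcoeffZ [('X_[m] * _)]mulrC mcoeffMX_if. Qed.

Lemma Jprod_mul a d p : Jprod a d p = p * S ^+ (d - a).+1.
Proof.
rewrite /Jprod; elim: (d - a).+1 => [|k IH] /=; first by rewrite expr0 mulr1.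
by rewrite IH /Jmap exprSr mulrA.
Qed.

Lemma mderiv_sumX i : S^`M(i) = 1.
Proof.
rewrite /sumX raddf_sum (bigD1 i) //= big1 ?addr0 => [|j neq_ji].
  rewrite mderivX mnm1E eqxx [X in 'X_[X]](_ : _ = 0%MM) ?mpolyX0 ?scale1r //.
  by apply/mnmP => j; rewrite !mnmE subnn.
by rewrite mderivX mnm1E (negbTE neq_ji) scale0r.
Qed.

Lemma mderiv_sumX_exp k i j : (S ^+ k)^`M(i) = (S ^+ k)^`M(j).
Proof.
elim: k => [|k IH]; first by rewrite expr0 -mpolyC1 !mderivC.
by rewrite exprSr !mderivM IH !mderiv_sumX.
Qed.

Lemma mcoeff_sumX_exp_shift k g i j :
  (S ^+ k)@_(g + U_(i))%MM *+ (g i).+1 = (S ^+ k)@_(g + U_(j))%MM *+ (g j).+1.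
Proof. by rewrite -!mcoeff_mderiv (mderiv_sumX_exp k i j). Qed.

End SumX.

Section Positivity.
Variables (R : numDomainType) (n : nat).
Implicit Types (p : {mpoly R[n]}) (m g : 'X_{1..n}).
Local Notation S := (sumX R n).

Lemma mcoeff_sumX_exp_ge0 k g : 0 <= (S ^+ k)@_g.
Proof.
elim: k g => [|k IH] g; first by rewrite expr0 mcoeff1 ler0n.
rewrite exprSr /sumX mulr_sumr raddf_sum sumr_ge0 // => i _.
by rewrite /= mcoeffMX_if; case: ifP.
Qed.

Lemma mcoeff_sumX_exp_gt0 k g : mdeg g = k -> 0 < (S ^+ k)@_g.
Proof.
elim: k g => [|k IH] g deg_g.
  by move/eqP: deg_g; rewrite mdeg_eq0 => /eqP->; rewrite expr0 mcoeff1 eqxx ltr01.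
have [i g_i] : exists i, (0 < g i)%N by apply: mdeg_gt0_mnm; rewrite deg_g.
rewrite exprSr /sumX mulr_sumr raddf_sum (bigD1 i) //= mcoeffMX_if lep1m_gt0 //.
rewrite ltr_wpDr ?IH //.
  by rewrite sumr_ge0 // => j _; rewrite mcoeffMX_if; case: ifP => // _; apply: mcoeff_sumX_exp_ge0.
by move: deg_g; rewrite -{1}(submK (lep1m_gt0 g_i)) mdegD mdeg1 addn1 => -[].
Qed.

Lemma nnz1_nonneg_homog p d : nonneg_vec p -> nnz p = 1%N -> p \is d.-homog ->
  exists c m, [/\ 0 < c, mdeg m = d & p = c *: 'X_[m]].
Proof.
rewrite /nnz => p_ge0; case E: (msupp p) => [|m [|? ?]] //= _ /dhomogP p_homog.
exists p@_m, m; split.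
- by rewrite lt_def p_ge0 andbT -mcoeff_msupp E mem_head.
- by apply: p_homog; rewrite E mem_head.
- by rewrite {1}(mpolyE p) E big_seq1.
Qed.

Lemma nonneg_XM m p : nonneg_vec ('X_[m] * p) -> nonneg_vec p.
Proof. by move=> Xp_ge0 g; have := Xp_ge0 (m + g)%MM; rewrite mulrC mcoeffMX. Qed.

End Positivity.

Section SignPattern.
Variables (R : numDomainType) (n : nat).
Implicit Types (c : R) (q : {mpoly R[n]}) (m : 'X_{1..n}).
Local Notation S := (sumX R n).

Lemma nonneg_ZXS c m k : 0 <= c -> nonneg_vec (c *: 'X_[m] * S ^+ k).
Proof.
move=> c_ge0 g; rewrite mcoeffZXM mulr_ge0 //.
by case: ifP => // _; apply: mcoeff_sumX_exp_ge0.
Qed.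

Lemma not_nonneg_sub_ZXS c m m' q k : (2 <= n)%N -> 0 < c -> ~~ (m' <= m)%MM ->
  ~ nonneg_vec ('X_[m'] * q - c *: 'X_[m] * S ^+ k).
Proof.
move=> n_ge2 c_gt0 nle_m'm v_ge0.
pose i0 : 'I_n := Ordinal (ltnW n_ge2); pose i1 : 'I_n := Ordinal n_ge2.
have [i nle_i] : exists i, ~~ (m' <= m + U_(i) *+ k)%MM.
  case le_0: (m' <= m + U_(i0) *+ k)%MM; last by exists i0; rewrite le_0.
  case le_1: (m' <= m + U_(i1) *+ k)%MM; last by exists i1; rewrite le_1.
  by rewrite (lem_addUn2 _ le_0 le_1) in nle_m'm.
have := v_ge0 (m + U_(i) *+ k)%MM.
rewrite mcoeffB mulrC mcoeffMX_if (negbTE nle_i) mcoeffZXM lem_addr addmC addmK sub0r.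
by rewrite oppr_ge0 lt_geF // mulr_gt0 // mcoeff_sumX_exp_gt0 // mdegUn.
Qed.

Lemma nnz_ZXS_add_ge c m q k : (0 < n)%N -> 0 < c -> nonneg_vec q -> (3 <= k)%N ->
  (size (dmonomials n 3) <= nnz (c *: 'X_[m] * S ^+ k + q))%N.
Proof.
move=> n_gt0 c_gt0 q_ge0 k_ge3; pose i0 : 'I_n := Ordinal n_gt0.
pose f t := (t + U_(i0) *+ (k - 3) + m)%MM.
have f_inj : {in dmonomials n 3 &, injective f} by move=> t1 t2 _ _ /addIm /addIm.
apply: leq_trans (count_le_nnz _ (dmonomials_uniq n 3) f_inj).
rewrite -count_predT; apply/eq_leq/eq_in_count => t.
rewrite mem_dmonomials => /eqP deg_t; apply: esym.
rewrite mcoeffD mcoeffZXM lem_addl addmK.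
rewrite lt0r_neq0 // ltr_wpDr ?q_ge0 // mulr_gt0 // mcoeff_sumX_exp_gt0 //.
by rewrite mdegD deg_t mdegUn; lia.
Qed.

End SignPattern.

Lemma mulrn_diff_gt0 (R : numDomainType) (c e a1 a2 b1 b2 : R) (x y z : nat) :
  0 < c -> 0 < e -> 0 < b2 -> (0 < x)%N -> (z < y)%N ->
  a1 *+ x = a2 *+ y -> b1 *+ x = b2 *+ z -> 0 <= c * a2 - e * b2 ->
  0 < c * a1 - e * b1.
Proof.
move=> c_gt0 e_gt0 b2_gt0 x_gt0 lt_zy; rewrite -(pmulrn_lgt0 _ x_gt0).
rewrite -[a1 *+ x]mulr_natr -[a2 *+ y]mulr_natr -[b1 *+ x]mulr_natr -[b2 *+ z]mulr_natr.
move=> a_eq b_eq diff2_ge0.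
have -> : (c * a1 - e * b1) *+ x = (c * a2 - e * b2) * y%:R + e * b2 * (y%:R - z%:R).
  by rewrite -mulr_natr mulrBl -!mulrA a_eq b_eq; ring.
by rewrite ltr_wpDl ?mulr_ge0 ?ler0n // !mulr_gt0 // subr_gt0 ltr_nat.
Qed.

Section Cancellation.
Variables (R : numDomainType) (n : nat) (c e : R) (K L : nat) (dl : 'X_{1..n}).
Hypotheses (c_gt0 : 0 < c) (e_gt0 : 0 < e) (K_eq : K = (L + mdeg dl)%N).
Local Notation S := (sumX R n).
Local Notation w := (c *: S ^+ K - e *: 'X_[dl] * S ^+ L).
Hypothesis w_ge0 : nonneg_vec w.
Hypotheses (L_ge2 : (2 <= L)%N) (odd_dl : odd (mdeg dl)).

Lemma mcoeff_cancel g : w@_g =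
  c * (S ^+ K)@_g - e * (if (dl <= g)%MM then (S ^+ L)@_(g - dl)%MM else 0).
Proof. by rewrite mcoeffB mcoeffZ mcoeffZXM. Qed.

Lemma mcoeff_cancel_gt0 g q p : mdeg g = K -> (0 < g q)%N -> dl q = 0%N ->
  (0 < dl p)%N -> 0 < w@_g.
Proof.
move=> deg_g g_q dl_q dl_p; rewrite mcoeff_cancel.
case: ifPn => [le_dl_g|_]; last by rewrite mulr0 subr0 mulr_gt0 ?mcoeff_sumX_exp_gt0.
pose nu := (g - dl - U_(q))%MM.
have le_q : (U_(q) <= g - dl)%MM by rewrite lep1m_gt0 // mnmBE dl_q subn0.
have gE : g = (dl + nu + U_(q))%MM by rewrite -addmA submK // addmC submK.
have shiftK := mcoeff_sumX_exp_shift R K (dl + nu)%MM q p.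
have shiftL := mcoeff_sumX_exp_shift R L nu q p.
have := w_ge0 (dl + nu + U_(p))%MM.
have le_dl x : (dl <= dl + nu + x)%MM by rewrite -addmA lem_addr.
have sub_dl x : (dl + nu + x - dl = nu + x)%MM by rewrite -addmA addmC addmK.
rewrite mcoeff_cancel le_dl sub_dl gE sub_dl => diff_p_ge0.
rewrite !mnmDE dl_q add0n in shiftK.
apply: (mulrn_diff_gt0 c_gt0 e_gt0 _ _ _ shiftK shiftL diff_p_ge0) => //; last by lia.
apply: mcoeff_sumX_exp_gt0; move: deg_g.
by rewrite gE !mdegD !mdeg1 K_eq; lia.
Qed.

Lemma mcoeff_cancel_eq0 g : mdeg g = K -> (0 < mdeg dl)%N -> w@_g = 0 ->
  (dl <= g)%MM /\ (forall q, 0 < g q -> 0 < dl q)%N.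
Proof.
move=> deg_g dl_gt0 w_g0; have [p dl_p] := mdeg_gt0_mnm dl_gt0.
split=> [|q g_q].
  have [//|nle] := boolP (dl <= g)%MM; move/eqP: w_g0.
  rewrite mcoeff_cancel (negbTE nle) mulr0 subr0.
  by rewrite gt_eqF ?mulr_gt0 ?mcoeff_sumX_exp_gt0.
rewrite lt0n; apply/negP => /eqP dl_q; move/eqP: w_g0.
by rewrite gt_eqF ?(mcoeff_cancel_gt0 deg_g g_q dl_q dl_p).
Qed.

Let dl_gt0 : (0 < mdeg dl)%N. Proof. by move: odd_dl; case: (mdeg dl). Qed.

Lemma mcoeff_cancel_eq0_zero_coord r t : dl r = 0%N -> mdeg t = 3%N ->
  w@_(t + U_(r) *+ (K - 3))%MM = 0 -> t = (dl *+ 3)%MM.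
Proof.
move=> dl_r deg_t w0.
have deg_g : mdeg (t + U_(r) *+ (K - 3))%MM = K by rewrite mdegD deg_t mdegUn; lia.
have [_ supp] := mcoeff_cancel_eq0 deg_g dl_gt0 w0.
have K3 : K = 3%N.
  case: (ltnP 3 K) => [K_gt3|]; last by lia.
  by move: (supp r); rewrite mnmDE mulmnE mnm1E eqxx mul1n dl_r; lia.
have [p /eqP dlE] : exists p, dl == U_(p)%MM by apply/mdeg1P; apply/eqP; lia.
rewrite dlE; apply: lem_mdeg_eq; last by rewrite mdegUn deg_t.
apply/mnm_lepP => j; rewrite mulmnE mnm1E.
case: (eqVneq p j) => [<-|neq_pj]; first by rewrite mul1n -deg_t mnm_le_mdeg.
move: (supp j); rewrite dlE mnmDE mulmnE !mnm1E (negbTE neq_pj) K3 !muln0 addn0; lia.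
Qed.

Lemma mcoeff_cancel_eq0_pos_coords r1 r2 m0 t : (forall s, 0 < dl s)%N -> r1 != r2 ->
  mdeg m0 = 3%N -> (m0 r1 <= 1)%N -> (forall s, s != r1 -> m0 s <= dl s)%N ->
  mdeg t = 3%N -> w@_(shiftm r1 r2 (K - 3) t) = 0 -> t = m0.
Proof.
move=> dl_pos neq_12 deg_m0 m0_r1 m0_le deg_t w0.
have deg_g : mdeg (shiftm r1 r2 (K - 3) t) = K by rewrite mdeg_shiftm deg_t; lia.
have [/mnm_lepP le_dl _] := mcoeff_cancel_eq0 deg_g dl_gt0 w0.
move: le_dl; rewrite /shiftm; case: (ltnP 0 (t r1)) => [t_r1|t_r10] le_dl.
  symmetry; apply: lem_mdeg_eq; last by rewrite deg_t deg_m0.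
  apply/mnm_lepP => s; case: (eqVneq s r1) => [->|neq_s1]; first by lia.
  apply: leq_trans (m0_le s neq_s1) _.
  by move: (le_dl s); rewrite mnmDE mulmnE mnm1E eq_sym (negbTE neq_s1) mul0n addn0.
by move: (le_dl r1) (dl_pos r1); rewrite mnmDE mulmnE mnm1E eq_sym (negbTE neq_12); lia.
Qed.

Lemma nnz_cancel_ge : (2 <= n)%N -> (size (dmonomials n 3) - 1 <= nnz w)%N.
Proof.
move=> n_ge2.
have [r1 [r2 fail_uniq]] : exists r1 r2, forall t t', mdeg t = 3%N -> mdeg t' = 3%N ->
    w@_(shiftm r1 r2 (K - 3) t) = 0 -> w@_(shiftm r1 r2 (K - 3) t') = 0 -> t = t'.
  case: (boolP [exists r, dl r == 0%N]) => [/existsP[r /eqP dl_r]|].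
    have fail := mcoeff_cancel_eq0_zero_coord dl_r.
    exists r, r => t t' deg_t deg_t'; rewrite /shiftm !if_same.
    by move=> /(fail _ deg_t) -> /(fail _ deg_t') ->.
  rewrite negb_exists => /forallP dl_neq0.
  have dl_pos s : (0 < dl s)%N by rewrite lt0n dl_neq0.
  have [r1 [m0 [deg_m0 m0_r1 m0_le]]] := exists_cubic_below n_ge2 dl_pos odd_dl.
  have [r2 neq_21] := exists_ord_neq r1 n_ge2.
  have neq_12 : r1 != r2 by rewrite eq_sym.
  have fail := mcoeff_cancel_eq0_pos_coords dl_pos neq_12 deg_m0 m0_r1 m0_le.
  by exists r1, r2 => t t' deg_t deg_t' /(fail _ deg_t) -> /(fail _ deg_t') ->.
have shift_inj : {in dmonomials n 3 &, injective (shiftm r1 r2 (K - 3))}.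
  by move=> t1 t2 _ _ /shiftm_inj.
apply: leq_trans _ (count_le_nnz w (dmonomials_uniq n 3) shift_inj).
apply: size_sub1_le_count (dmonomials_uniq n 3) _ => t t'.
by rewrite !mem_dmonomials !negbK => /eqP deg_t /eqP deg_t' /eqP w0 /eqP w0'; apply: fail_uniq.
Qed.

End Cancellation.

Lemma nnz_ZXS_sub_ge (R : numDomainType) (n : nat) (c e : R) (al be : 'X_{1..n}) K L :
  (2 <= n)%N -> 0 < c -> 0 < e -> (2 <= L)%N -> odd (mdeg be - mdeg al) ->
  K = (L + (mdeg be - mdeg al))%N ->
  let v := c *: 'X_[al] * sumX R n ^+ K - e *: 'X_[be] * sumX R n ^+ L in
  nonneg_vec v -> (size (dmonomials n 3) - 1 <= nnz v)%N.
Proof.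
move=> n_ge2 c_gt0 e_gt0 L_ge2 odd_deg K_eq v v_ge0.
have le_al_be : (al <= be)%MM.
  apply: contraT => nle.
  case: (not_nonneg_sub_ZXS (q := c *: sumX R n ^+ K) (k := L) n_ge2 e_gt0 nle).
  by rewrite -scalerAr scalerAl.
have [dl deg_dl vE] : exists2 dl, mdeg dl = (mdeg be - mdeg al)%N &
    v = 'X_[al] * (c *: sumX R n ^+ K - e *: 'X_[dl] * sumX R n ^+ L).
  exists (be - al)%MM; first by rewrite -{2}(submK le_al_be) mdegD addnK.
  rewrite /v -{1}(submK le_al_be) mpolyXD mulrBr -!scalerAl -!scalerAr.
  by rewrite mulrA (mulrC 'X_[be - al]).
rewrite vE nnz_XM; rewrite vE in v_ge0.
by apply: nnz_cancel_ge (nonneg_XM v_ge0) _ _ n_ge2; rewrite ?deg_dl.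
Qed.

Theorem lemma5p4 (R : realFieldType) (n d a b : nat)
  (hn : (2 <= n)%N) (hd : (2 <= d)%N) (hab : (a < b)%N) (hbd : (b <= d)%N)
  (ga gb : {mpoly R[n]})
  (ha_hom : ga \is (a).-homog) (hb_hom : gb \is (b).-homog)
  (ha_nn : nonneg_vec ga) (hb_nn : nonneg_vec gb)
  (ha_R : nnz ga = 1%N) (hb_R : nnz gb = 1%N) :
  let v := (-1) ^+ (d - a) *: Jprod a d ga + (-1) ^+ (d - b) *: Jprod b d gb in
  nonneg_vec v -> ('C(n + 2, 3) - 1 <= nnz v)%N.
Proof.
move=> v; rewrite /v !Jprod_mul.
have [c [al [c_gt0 deg_al ->]]] := nnz1_nonneg_homog ha_nn ha_R ha_hom.
have [e [be [e_gt0 deg_be ->]]] := nnz1_nonneg_homog hb_nn hb_R hb_hom.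
have -> : 'C(n + 2, 3) = size (dmonomials n 3).
  by rewrite size_dmonomials; [congr binomial; lia | lia].
have odd_ab : odd (d - a) = odd (d - b) (+) odd (b - a) by rewrite -oddD; congr odd; lia.
rewrite -(@signr_odd R (d - a)) -(@signr_odd R (d - b)).
case odd_da: (odd (d - a)); first move=> v_ge0.
  have nle : ~~ (be <= al)%MM.
    by apply: contraTN hab => /lem_mdeg; rewrite deg_al deg_be -leqNgt.
  case: (not_nonneg_sub_ZXS (q := ((-1) ^+ odd (d - b) * e) *: sumX R n ^+ (d - b).+1)
    (k := (d - a).+1) hn c_gt0 nle).
  move: v_ge0; rewrite expr1 scaleN1r addrC -!scalerAl scalerA scalerAr.
  by rewrite scalerAl.
rewrite expr0 scale1r.
case odd_db: (odd (d - b)); rewrite ?expr1 ?expr0 ?scaleN1r ?scale1r => v_ge0.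
  have odd_ba : odd (b - a) by move: odd_ab; rewrite odd_da odd_db; case: odd.
  apply: (nnz_ZXS_sub_ge hn c_gt0 e_gt0 _ _ _ v_ge0); rewrite ?deg_al ?deg_be //; lia.
have even_ba : odd (b - a) = false by move: odd_ab; rewrite odd_da odd_db.
have ba_ne1 : (b - a != 1)%N by apply: (contraFneq _ even_ba) => ->.
apply: leq_trans (leq_subr 1 _) (nnz_ZXS_add_ge _ _ c_gt0 (nonneg_ZXS _ _ (ltW e_gt0)) _).
- exact: ltnW.
- by lia.
Qed.
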